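(* For every $n\ge1$ and every $r\in\mathbb{N}\cup\{0\}$, every polynomial function $C_0\times\cdots\times C_r\to\mathbb{R}$ that is invariant under the natural action of $\mathrm{Gl}_n$ is constant.
   Context: $V=T_xX$ is an $n$-dimensional real vector space and $\mathrm{Gl}_n=\mathrm{Gl}(V)$. For $m\ge0$, $C_m\subseteq V\otimes(V^* )^{\otimes(m+2)}$ is the space of $(1,m+2)$-tensors $T^l_{ijk_1\dots k_m}$ symmetric in $k_1,\dots,k_m$ and whose symmetrization over all $m+2$ covariant indices vanishes; $\mathrm{Gl}_n$ acts on it by the standard tensorial action. *)

From HB Require Import structures.
From mathcomp Require Import all_boot all_order all_algebra all_fingroup.
Set Implicit Arguments. Unset Strict Implicit. Unset Printing Implicit Defensive.
Import Order.TTheory GRing.Theory Num.Theory.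
Local Open Scope ring_scope.

(* Covariant multi-index (i, j, k_1, ..., k_m) : m+2 indices in 'I_n. *)
Definition cov (n m : nat) := {ffun 'I_m.+2 -> 'I_n}.

(* A (1, m+2)-tensor on V = R^n : T^l_{w} with l : 'I_n, w : cov n m. *)
Definition tensor (R : Type) (n m : nat) := 'I_n -> cov n m -> R.

Definition permute_cov (n m : nat) (s : 'S_m.+2) (w : cov n m) : cov n m :=
  [ffun p => w (s p)].

(* Membership in C_m: symmetric in k_1..k_m (permutations of the slots fixing
   the first two slots), and the symmetrization over all m+2 covariant slots
   vanishes (we omit the nonzero factor 1/(m+2)!). *)
Definition in_C (R : realFieldType) (n m : nat) (T : tensor R n m) : Prop :=
  (forall s : 'S_m.+2, s ord0 = ord0 -> s (inord 1) = inord 1 ->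
     forall l w, T l (permute_cov s w) = T l w)
  /\ (forall l w, \sum_(s : 'S_m.+2) T l (permute_cov s w) = 0).

Definition tensor_act (R : realFieldType) (n m : nat) (g : 'M[R]_n)
  (T : tensor R n m) : tensor R n m :=
  fun l w => \sum_(a < n) \sum_(u : cov n m)
     g l a * T a u * \prod_(p < m.+2) (invmx g) (u p) (w p).

Definition config (R : realFieldType) (n r : nat) :=
  forall m : 'I_r.+1, tensor R n m.

Definition in_prod (R : realFieldType) (n r : nat) (T : config R n r) : Prop :=
  forall m : 'I_r.+1, in_C (T m).

Definition config_act (R : realFieldType) (n r : nat) (g : 'M[R]_n)
  (T : config R n r) : config R n r :=
  fun m => tensor_act g (T m).

Definition var (n r : nat) := {m : 'I_r.+1 & ('I_n * cov n m)%type}.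

Definition coords (R : realFieldType) (n r : nat) (T : config R n r)
  (x : var n r) : R := T (tag x) (tagged x).1 (tagged x).2.

Definition poly_fun_on (R : realFieldType) (n r : nat)
  (P : config R n r -> Prop) (F : config R n r -> R) : Prop :=
  exists s : seq (R * {ffun var n r -> nat}),
    forall T, P T ->
      F T = \sum_(c <- s) c.1 * \prod_(x : var n r) coords T x ^+ c.2 x.

From HB Require Import structures.
From mathcomp Require Import all_boot all_order all_algebra all_fingroup.
From mathcomp Require Import ring.
From Stdlib Require Import FunctionalExtensionality.
Set Implicit Arguments. Unset Strict Implicit.
Import Order.TTheory GRing.Theory Num.Theory.
Local Open Scope ring_scope.

(** The scalar matrix [l^-1] acts on [C_m] as multiplication by [l^(m+1)].
    Hence, for a fixed configuration [T], the function [l |-> F (l . T)] is a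
    polynomial in [l] which is constant on [l <> 0], so it also takes that
    value at [l = 0]; but [0 . T] is the zero configuration, whence [F T] does
    not depend on [T]. *)

Lemma horner0_of_const_on_nonzero (R : numDomainType) (p : {poly R}) (c : R) :
  (forall x, x != 0 -> p.[x] = c) -> p.[0] = c.
Proof.
move=> p_const; pose rs : seq R := [seq i.+1%:R | i <- iota 0 (size (p - c%:P))].
have p_eq_c : p - c%:P = 0.
  apply: (@roots_geq_poly_eq0 _ _ rs); last by rewrite size_map size_iota.
    apply/allP => _ /mapP[i _ ->].
    by rewrite /root !hornerE p_const ?subrr ?pnatr_eq0.
  by rewrite map_inj_uniq ?iota_uniq // => i j /eqP; rewrite eqr_nat eqSS => /eqP.
have := congr1 (horner^~ 0) p_eq_c; rewrite !hornerE => /eqP.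
by rewrite subr_eq0 => /eqP.
Qed.

Lemma tensor_act_scalar (R : realFieldType) (n m : nat) (a : R)
    (T : tensor R n m) l w :
  tensor_act a%:M T l w = a * a^-1 ^+ m.+2 * T l w.
Proof.
rewrite /tensor_act invmx_scalar (bigD1 l) //= [X in _ + X]big1 ?addr0
  => [|b /negbTE bl]; last first.
  by apply: big1 => u _; rewrite mxE eq_sym bl mulr0n !mul0r.
rewrite (bigD1 w) //= [X in _ + X]big1 ?addr0 => [|u uw]; last first.
  have [p /negbTE up] : exists p, u p != w p.
    apply/existsP; apply: contraNT uw => /existsPn eq_uw.
    by apply/eqP/ffunP => p; apply/eqP/negPn/eq_uw.
  by rewrite (bigD1 p) //= !mxE up mulr0n mul0r mulr0.
rewrite (eq_bigr (fun=> a^-1)) => [|p _]; last by rewrite mxE eqxx mulr1n.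
by rewrite prodr_const card_ord mxE eqxx mulr1n; ring.
Qed.

Definition config_scale (R : realFieldType) (n r : nat) (l : R)
    (T : config R n r) : config R n r :=
  fun m a w => l ^+ m.+1 * T m a w.

Lemma config_act_scalar_inv (R : realFieldType) (n r : nat) (l : R)
    (T : config R n r) :
  l != 0 -> config_act (l^-1)%:M T = config_scale l T.
Proof.
move=> l_neq0; apply: functional_extensionality_dep => m.
do 2!apply: functional_extensionality => ?.
by rewrite /config_act tensor_act_scalar invrK exprS mulrA mulVf // mul1r.
Qed.

Lemma in_prod_scale (R : realFieldType) (n r : nat) (l : R) (T : config R n r) :
  in_prod T -> in_prod (config_scale l T).
Proof.
move=> T_in m; have [T_sym T_alt] := T_in m; split => [s s0 s1 a w | a w].
  by rewrite /config_scale T_sym.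
by rewrite /config_scale -mulr_sumr T_alt mulr0.
Qed.

Lemma config_scale0 (R : realFieldType) (n r : nat) (T T' : config R n r) :
  config_scale 0 T = config_scale 0 T'.
Proof.
apply: functional_extensionality_dep => m.
by do 2!apply: functional_extensionality => ?; rewrite /config_scale expr0n !mul0r.
Qed.

(* Each monomial of [F] is multiplied by [l] raised to its weighted degree,
   coordinate [(m, a, w)] having weight [m + 1]. *)
Lemma poly_fun_scale (R : realFieldType) (n r : nat) (F : config R n r -> R)
    (T : config R n r) :
  poly_fun_on (@in_prod R n r) F -> in_prod T ->
  exists p : {poly R}, forall l, p.[l] = F (config_scale l T).
Proof.
move=> [s F_poly] T_in.
pose deg (c : R * {ffun var n r -> nat}) := (\sum_(x : var n r) (tag x).+1 * c.2 x)%N.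
pose p : {poly R} :=
  \sum_(c <- s) (c.1 * \prod_(x : var n r) coords T x ^+ c.2 x)%:P * 'X^(deg c).
exists p => l.
rewrite F_poly; last exact: in_prod_scale.
rewrite horner_sum; apply: eq_bigr => c _.
rewrite hornerM hornerXn hornerC -mulrA -prodrXr -big_split /=.
by congr (_ * _); apply: eq_bigr => x _; rewrite /coords exprMn exprM mulrC.
Qed.

Theorem mainTheorem8 (R : realFieldType) (n r : nat) (F : config R n r -> R) :
  (0 < n)%N ->
  poly_fun_on (@in_prod R n r) F ->
  (forall g : 'M[R]_n, g \in unitmx ->
     forall T, in_prod T -> F (config_act g T) = F T) ->
  forall T T', in_prod T -> in_prod T' -> F T = F T'.
Proof.
move=> _ F_poly F_inv.
have F_scale0 T : in_prod T -> F T = F (config_scale 0 T).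
  move=> T_in; have [p p_scale] := poly_fun_scale F_poly T_in.
  rewrite -p_scale; symmetry; apply: horner0_of_const_on_nonzero => l l_neq0.
  rewrite p_scale -config_act_scalar_inv // F_inv //.
  by rewrite unitmxE det_scalar unitfE expf_neq0 ?invr_eq0.
by move=> T T' T_in T'_in; rewrite F_scale0 // (F_scale0 T') // (config_scale0 T T').
Qed.
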